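(* Let $n,p,q,c,d$ be nonnegative integers. Then \[ \begin{split} &\sum_{k=0}^n \binom{p+k}{p}\binom{q+n-k}{q}\binom{k}{c}\binom{n-k}{d}H_{p+k}H_{q+n-k}\\ &= \binom{n+p+q+1}{n-c-d}\binom{p+c}{c}\binom{q+d}{d} \Bigl[H_{p+q+c+d+1}^{(2)}-H_{n+p+q+1}^{(2)}\\ &\qquad +(H_{n+p+q+1}-H_{p+q+c+d+1}+H_{p+c})(H_{n+p+q+1}-H_{p+q+c+d+1}+H_{q+d})\Bigr]. \end{split} \]
   Context: For a nonnegative integer $N$ and $m\in\{1,2\}$, $H_N^{(m)}=\sum_{j=1}^N \frac{1}{j^m}$ (empty sum $=0$), and $H_N=H_N^{(1)}$. For integers $r$ and $j$, $\binom{r}{j}=\frac{r(r-1)\cdots(r-j+1)}{j!}$ if $j\ge 0$ and $\binom{r}{j}=0$ if $j<0$. *)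

From mathcomp Require Import all_boot all_order all_algebra.
Set Implicit Arguments. Unset Strict Implicit. Unset Printing Implicit Defensive.
Import Order.TTheory GRing.Theory Num.Theory.
Local Open Scope ring_scope.

Definition harm (m N : nat) : rat := \sum_(1 <= j < N.+1) ((j%:R) ^+ m)^-1.
Definition H (N : nat) : rat := harm 1 N.

Definition binz (r : nat) (j : int) : rat :=
  match j with
  | Posz k => ('C(r, k))%:R
  | Negz _ => 0
  end.

(* Let P_i(z) = C(z+i, i) = prod_(t=1..i) (z+t)/t.  Its logarithmic derivative is
   sum_(t=1..i) 1/(z+t) = H_(z+i) - H_z, so at natural x
     C(x+i, i) H_(x+i) = P_i(x) H_x + P_i'(x),
   and P_i''/P_i = (H_(z+i) - H_z)^2 - (H^(2)_(z+i) - H^(2)_z).  Only k = c + i with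
   0 <= i <= m := n - c - d contribute, and C(p+k, p) C(k, c) = C(p+c, c) C(p+k, i)
   absorbs the factors C(k, c), C(n-k, d).  The sum is then a combination of the
   convolution sum_i P_i(x) P_(m-i)(y) = P_m(x+y+1) (Chu-Vandermonde) and of its
   derivatives in x and y, obtained by differentiating the convolution as a polynomial
   identity in one variable, valid because it holds at every natural number. *)

From mathcomp Require Import all_boot all_order all_algebra.
From mathcomp Require Import ring zify.
Import Order.TTheory GRing.Theory Num.Theory.

Lemma hockey_stick x m : \sum_(i < m.+1) 'C(x + i, i) = 'C(x + 1 + m, m).
Proof.
elim: m => [|m IHm]; first by rewrite big_ord1 !bin0.
by rewrite big_ord_recr /= IHm addn1 !addnS !addSn binS addnC.
Qed.

Lemma Vandermonde_diag x y m :
  \sum_(i < m.+1) 'C(x + i, i) * 'C(y + (m - i), m - i) = 'C(x + y + 1 + m, m).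
Proof.
elim: y m => [|y IHy] m.
  under eq_bigr => i _ do rewrite add0n binn muln1.
  by rewrite hockey_stick addn0.
elim: m => [|m IHm]; first by rewrite big_ord1 !bin0.
have Pascal (i : 'I_m.+1) : 'C(x + i, i) * 'C(y.+1 + (m.+1 - i), m.+1 - i)
    = 'C(x + i, i) * 'C(y + (m.+1 - i), m.+1 - i) + 'C(x + i, i) * 'C(y.+1 + (m - i), m - i).
  by rewrite -mulnDr subSn -1?ltnS // [y.+1 + _]addSn binS -addSnnS.
rewrite big_ord_recr /= subnn bin0 muln1 (eq_bigr _ (fun i _ => Pascal i)).
rewrite big_split /= IHm addnAC.
have := IHy m.+1; rewrite big_ord_recr /= subnn addn0 bin0 muln1 => ->.
have -> : x + y.+1 + 1 + m.+1 = (x + y + 1 + m.+1).+1 by rewrite !addnS !addSn.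
by rewrite binS; congr (_ + 'C(_, _)); lia.
Qed.

Lemma mul_bin_trinomial p c i :
  'C(p + c + i, p) * 'C(c + i, c) = 'C(p + c, c) * 'C(p + c + i, i).
Proof.
have fact_pos : 0 < p`! * (c`! * i`!) by rewrite !muln_gt0 !fact_gt0.
apply/eqP; rewrite -(eqn_pmul2r fact_pos); apply/eqP.
have Ec : 'C(c + i, c) * (c`! * i`!) = (c + i)`! by rewrite -(bin_fact (leq_addr i c)) addKn.
have Ep : 'C(p + c, c) * (c`! * p`!) = (p + c)`! by rewrite -(bin_fact (leq_addl p c)) addnK.
have Epc : 'C(p + c + i, p) * (p`! * (c + i)`!) = (p + c + i)`!.
  by rewrite -(bin_fact (leq_trans (leq_addr c p) (leq_addr i _))) -addnA addKn.
have Ei : 'C(p + c + i, i) * (i`! * (p + c)`!) = (p + c + i)`!.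
  by rewrite -(bin_fact (leq_addl _ i)) addnK.
rewrite -[LHS]mulnA [_ * (p`! * _)]mulnCA Ec Epc.
by rewrite -Ei -Ep; ring.
Qed.

Local Open Scope ring_scope.

Section BinomialPolynomial.
Context {R : numFieldType}.
Implicit Types (z : R) (P Q G : {poly R}).

Definition binpoly (i : nat) : {poly R} :=
  \prod_(t < i) (('X + t.+1%:R%:P) * (t.+1%:R^-1)%:P).

Definition harm_tail (k i : nat) z : R := \sum_(t < i) ((z + t.+1%:R) ^+ k)^-1.

Lemma binpolyS i : binpoly i.+1 = binpoly i * (('X + i.+1%:R%:P) * (i.+1%:R^-1)%:P).
Proof. by rewrite /binpoly big_ord_recr. Qed.

Lemma harm_tailS k i z : harm_tail k i.+1 z = harm_tail k i z + ((z + i.+1%:R) ^+ k)^-1.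
Proof. by rewrite /harm_tail big_ord_recr. Qed.

Lemma horner_binpoly (a i : nat) : (binpoly i).[a%:R] = 'C(a + i, i)%:R.
Proof.
elim: i => [|i IHi]; first by rewrite /binpoly big_ord0 hornerC addn0 bin0.
rewrite binpolyS !(hornerM, hornerD, hornerX, hornerC) IHi -natrD addnS.
by rewrite mulrA -natrM mulnC (mul_bin_diag (a + i).+1) natrM mulrC mulKf ?pnatr_eq0.
Qed.

Lemma addr_natS_neq0 (t : nat) {z} : 0 <= z -> z + t.+1%:R != 0.
Proof. by move=> z_ge0; rewrite lt0r_neq0 // ltr_wpDl. Qed.

Lemma deriv_binpoly i z : 0 <= z ->
  (binpoly i)^`().[z] = (binpoly i).[z] * harm_tail 1 i z.
Proof.
move=> z_ge0; elim: i => [|i IHi].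
  by rewrite /binpoly big_ord0 derivC hornerC /harm_tail big_ord0 mulr0.
rewrite binpolyS harm_tailS !(derivM, derivD, derivX, derivC).
rewrite !(hornerM, hornerD, hornerX, hornerC) IHi.
by rewrite expr1; field; rewrite nat1r addr_natS_neq0 // pnatr_eq0.
Qed.

Lemma deriv2_binpoly i z : 0 <= z ->
  (binpoly i)^`()^`().[z] = (binpoly i).[z] * (harm_tail 1 i z ^+ 2 - harm_tail 2 i z).
Proof.
move=> z_ge0; elim: i => [|i IHi].
  by rewrite /binpoly big_ord0 !derivC horner0 /harm_tail !big_ord0 expr0n subr0 mulr0.
rewrite binpolyS !harm_tailS !(derivM, derivD, derivX, derivC).
rewrite !(hornerM, hornerD, hornerX, hornerC) IHi deriv_binpoly //.
by field; rewrite nat1r addr_natS_neq0 // pnatr_eq0.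
Qed.

Lemma eq_poly_nat P Q : (forall n : nat, P.[n%:R] = Q.[n%:R]) -> P = Q.
Proof.
move=> eqPQ; apply/eqP; rewrite -subr_eq0; apply/eqP.
apply: (@roots_geq_poly_eq0 _ _ [seq i%:R | i <- iota 0 (size (P - Q))]).
- by apply/allP => _ /mapP [i _ ->]; rewrite /root hornerD hornerN eqPQ subrr.
- by rewrite map_inj_uniq ?iota_uniq // => i j /eqP; rewrite eqr_nat => /eqP.
- by rewrite size_map size_iota.
Qed.

Lemma deriv_horner_shift {P G} {k : R} :
  (forall x : nat, P.[x%:R] = G.[x%:R + k]) -> forall x, P^`().[x] = G^`().[x + k].
Proof.
move=> eqPG x; have -> : P = G \Po ('X + k%:P).
  by apply: eq_poly_nat => n; rewrite horner_comp hornerD hornerX hornerC eqPG.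
by rewrite deriv_comp derivD derivX derivC addr0 mulr1 horner_comp hornerD hornerX hornerC.
Qed.

Lemma conv_deriv_l {I} {r : seq I} {F G : I -> {poly R}} {K} :
  (forall x y : nat, \sum_(i <- r) (F i).[x%:R] * (G i).[y%:R] = K.[(x + y + 1)%N%:R]) ->
  forall x y : nat, \sum_(i <- r) (F i)^`().[x%:R] * (G i).[y%:R] = K^`().[(x + y + 1)%N%:R].
Proof.
move=> conv x y; set P := \sum_(i <- r) (G i).[y%:R] *: F i.
have horner_P (x' : R) : P.[x'] = \sum_(i <- r) (F i).[x'] * (G i).[y%:R].
  by rewrite horner_sum; apply: eq_bigr => i _; rewrite hornerZ mulrC.
have deriv_P : P^`() = \sum_(i <- r) (G i).[y%:R] *: (F i)^`().
  by rewrite raddf_sum; apply: eq_bigr => i _; exact: derivZ.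
have P_shift (x' : nat) : P.[x'%:R] = K.[x'%:R + (y + 1)%:R].
  by rewrite horner_P -natrD addnA conv.
rewrite -addnA natrD -(deriv_horner_shift P_shift) deriv_P horner_sum.
by apply: eq_bigr => i _; rewrite hornerZ mulrC.
Qed.

Lemma conv_deriv_r {I} {r : seq I} {F G : I -> {poly R}} {K} :
  (forall x y : nat, \sum_(i <- r) (F i).[x%:R] * (G i).[y%:R] = K.[(x + y + 1)%N%:R]) ->
  forall x y : nat, \sum_(i <- r) (F i).[x%:R] * (G i)^`().[y%:R] = K^`().[(x + y + 1)%N%:R].
Proof.
move=> conv x y; rewrite [(x + y)%N]addnC; under eq_bigr do rewrite mulrC.
apply: conv_deriv_l => x' y'.
by rewrite [(x' + y')%N]addnC -conv; apply: eq_bigr => i _; rewrite mulrC.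
Qed.

Lemma binpoly_conv (m x y : nat) :
  \sum_(i < m.+1) (binpoly i).[x%:R] * (binpoly (m - i)).[y%:R] = (binpoly m).[(x + y + 1)%N%:R].
Proof.
rewrite horner_binpoly -Vandermonde_diag natr_sum.
by apply: eq_bigr => i _; rewrite !horner_binpoly natrM.
Qed.

End BinomialPolynomial.

Lemma harm_addn k a i : harm k (a + i) = harm k a + harm_tail k i a%:R.
Proof.
elim: i => [|i IHi]; first by rewrite addn0 /harm_tail big_ord0 addr0.
rewrite addnS /harm big_nat_recr //= -/(harm k (a + i)) IHi harm_tailS.
by rewrite -addrA -natrD addnS.
Qed.

Lemma H_addn a i : H (a + i) = H a + harm_tail 1 i a%:R.
Proof. exact: harm_addn. Qed.

Lemma sum_bin_harm_conv a b m :
  \sum_(i < m.+1) ('C(a + i, i)%:R * H (a + i)) * ('C(b + (m - i), m - i)%:R * H (b + (m - i)))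
  = 'C(a + b + 1 + m, m)%:R * (harm 2 (a + b + 1) - harm 2 (a + b + 1 + m)
      + (H (a + b + 1 + m) - H (a + b + 1) + H a) * (H (a + b + 1 + m) - H (a + b + 1) + H b)).
Proof.
have binH (x i : nat) :
    'C(x + i, i)%:R * H (x + i) = (binpoly i).[x%:R] * H x + (binpoly i)^`().[x%:R] :> rat.
  by rewrite H_addn -horner_binpoly deriv_binpoly ?ler0n //; ring.
under eq_bigr => i _ do rewrite !binH.
rewrite (eq_bigr (fun i : 'I_m.+1 =>
     H a * H b * ((binpoly i).[a%:R] * (binpoly (m - i)).[b%:R])
   + H a * ((binpoly i).[a%:R] * (binpoly (m - i))^`().[b%:R])
   + H b * ((binpoly i)^`().[a%:R] * (binpoly (m - i)).[b%:R])
   + (binpoly i)^`().[a%:R] * (binpoly (m - i))^`().[b%:R])) => [|i _]; last by ring.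
rewrite !big_split /= -!mulr_sumr binpoly_conv (conv_deriv_l (binpoly_conv m)).
rewrite (conv_deriv_r (binpoly_conv m)) (conv_deriv_r (conv_deriv_l (binpoly_conv m))).
rewrite -horner_binpoly deriv2_binpoly ?ler0n // deriv_binpoly ?ler0n //.
by rewrite !H_addn !harm_addn; ring.
Qed.

Lemma sum_nat_window (V : nmodType) (F : nat -> V) n c m :
  (c + m <= n)%N -> (forall k, (k <= n)%N -> (k < c)%N || (c + m < k)%N -> F k = 0) ->
  \sum_(0 <= k < n.+1) F k = \sum_(i < m.+1) F (c + i)%N.
Proof.
move=> le_cm_n F0; have le_c_n := leq_trans (leq_addr m c) le_cm_n.
rewrite (big_cat_nat (n := c)) ?(leqW le_c_n) //= big1_seq ?add0r; last first.
  move=> k /andP[_]; rewrite mem_index_iota => /andP[_ lt_k_c].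
  by rewrite F0 ?lt_k_c // (leq_trans (ltnW lt_k_c)).
rewrite (big_cat_nat (n := (c + m.+1)%N)) ?leq_addr ?addnS //= [X in _ + X]big1_seq ?addr0.
  rewrite -{1}[c]add0n big_addn -addnS addKn big_mkord.
  by apply: eq_bigr => i _; rewrite addnC.
by move=> k /andP[_]; rewrite mem_index_iota => /andP[lt_cm_k le_k_n]; rewrite F0 ?lt_cm_k ?orbT.
Qed.

Lemma bin_harm_summand_shift p q c d i j :
  'C(p + (c + i), p)%:R * 'C(q + (d + j), q)%:R * 'C(c + i, c)%:R * 'C(d + j, d)%:R
    * H (p + (c + i)) * H (q + (d + j))
  = 'C(p + c, c)%:R * 'C(q + d, d)%:R
    * (('C(p + c + i, i)%:R * H (p + c + i)) * ('C(q + d + j, j)%:R * H (q + d + j))) :> rat.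
Proof.
transitivity ('C(p + c + i, p)%:R * 'C(c + i, c)%:R * ('C(q + d + j, q)%:R * 'C(d + j, d)%:R)
    * H (p + c + i) * H (q + d + j) : rat); first by rewrite !addnA; ring.
by rewrite -!natrM !mul_bin_trinomial !natrM; ring.
Qed.

Theorem mainTheorem5 (n p q c d : nat) :
  \sum_(0 <= k < n.+1)
     ('C(p + k, p))%:R * ('C(q + (n - k), q))%:R * ('C(k, c))%:R * ('C(n - k, d))%:R
       * H (p + k) * H (q + (n - k))
  = binz (n + p + q + 1) (n%:Z - c%:Z - d%:Z) * ('C(p + c, c))%:R * ('C(q + d, d))%:R
    * (harm 2 (p + q + c + d + 1) - harm 2 (n + p + q + 1)
       + (H (n + p + q + 1) - H (p + q + c + d + 1) + H (p + c))
         * (H (n + p + q + 1) - H (p + q + c + d + 1) + H (q + d))).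
Proof.
have vanish k : (k < c)%N || (n - k < d)%N ->
    'C(p + k, p)%:R * 'C(q + (n - k), q)%:R * 'C(k, c)%:R * 'C(n - k, d)%:R
      * H (p + k) * H (q + (n - k)) = 0 :> rat.
  by case/orP => /bin_small ->; rewrite !(mul0r, mulr0).
have [lt_n_cd | le_cd_n] := ltnP n (c + d).
  rewrite big_nat_cond big1 => [|k /andP[/andP[_ le_k_n] _]]; last by apply: vanish; lia.
  have -> : binz (n + p + q + 1) (n%:Z - c%:Z - d%:Z) = 0.
    by case E : (_ - _ - _) => [j|j] //; exfalso; lia.
  by rewrite !mul0r.
have [m n_eq] : exists m, n = (c + d + m)%N by exists (n - (c + d))%N; rewrite subnKC.
subst n; rewrite (_ : _ - _ - _ = m%:Z); last by lia.
rewrite (@sum_nat_window _ _ _ c m) => [| |k le_k_n /orP[lt_k_c | lt_cm_k]];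
  [| lia | by rewrite vanish ?lt_k_c | by rewrite vanish // (_ : _ - k < d)%N ?orbT; lia].
under eq_bigr => i _
  do rewrite -(addnA c d m) subnDl -(addnBA _ (leq_ord i)) bin_harm_summand_shift.
rewrite -mulr_sumr sum_bin_harm_conv /binz !addnA.
have -> : (c + d + m + p + q + 1 = p + c + q + d + 1 + m)%N by lia.
have -> : (p + q + c + d + 1 = p + c + q + d + 1)%N by lia.
by ring.
Qed.
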